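(* Let $\mathcal{S}$ be a finite state space with non-terminal states $\mathcal{S}_N$, let $r:\mathcal{S}\to\mathbb{R}$ satisfy $r(s)<0$ for all $s\in\mathcal{S}_N$, let $\lambda>0$, and let $\mathbf{P}^{\pi_d}$ be the state-transition matrix of the default policy $\pi_d$, with rows of non-terminal states summing to $1$ and rows of terminal states equal to zero. Let $\mathbf{Z}=\big[\operatorname{diag}(\exp(-\mathbf{r}/\lambda))-\mathbf{P}^{\pi_d}\big]^{-1}$ and $\operatorname{Sym}(\mathbf{Z})=(\mathbf{Z}+\mathbf{Z}^\top)/2$. Assume there is exactly one start state $s_0$ and that every state is reachable from $s_0$ under the default policy, i.e. for every $s\in\mathcal{S}$ there is a finite sequence of states $s_0=u_0,u_1,\dots,u_k=s$ with $\prod_{t=0}^{k-1}\mathbf{P}^{\pi_d}(u_t,u_{t+1})>0$. Then the largest eigenvalue of $\operatorname{Sym}(\mathbf{Z})$ is positive and its corresponding (top) eigenvector can be chosen with all entries positive.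
   Context: $\mathbf{P}^{\pi_d}(s,s')$ is the probability of transitioning from $s$ to $s'$ under the default policy $\pi_d$, which assigns nonzero probability to all state-action pairs; $\exp$ acts entrywise. $\mathbf{Z}$ is the default representation (DR). *)

From HB Require Import structures.
From mathcomp Require Import all_boot all_order all_algebra.
From mathcomp Require Import all_classical all_reals all_analysis.
Set Implicit Arguments. Unset Strict Implicit. Unset Printing Implicit Defensive.
Import Order.TTheory GRing.Theory Num.Theory.
Local Open Scope ring_scope.

Definition default_rep (R : realType) (n : nat) (r : 'I_n -> R) (lambda : R)
  (P : 'M[R]_n) : 'M[R]_n :=
  invmx (diag_mx (\row_i expR (- r i / lambda)) - P).

Definition symm_part (R : realType) (n : nat) (A : 'M[R]_n) : 'M[R]_n :=
  2^-1 *: (A + A^T).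

Definition reachable (R : realType) (n : nat) (P : 'M[R]_n) (s0 s : 'I_n) : Prop :=
  exists (k : nat) (u : nat -> 'I_n),
    u 0%N = s0 /\ u k = s /\ 0 < \prod_(t < k) P (u t) (u t.+1).

From HB Require Import structures.
From mathcomp Require Import all_boot all_order all_algebra.
From mathcomp Require Import all_classical all_reals all_analysis.
From mathcomp Require Import lra ring.
Import Order.TTheory GRing.Theory Num.Theory numFieldNormedType.Exports.
Local Open Scope ring_scope.
Set Implicit Arguments. Unset Strict Implicit. Unset Printing Implicit Defensive.

(* Z is the inverse of M = diag(exp(-r/lambda)) - P, and every row of P sums to less
   than the corresponding diagonal entry.  Such an M obeys a minimum principle
   (M x >= 0 implies x >= 0), so it is invertible with Z >= 0, and row s0 of Z stays
   positive along every path of positive transitions out of s0, hence everywhere.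
   Sym(Z) is then symmetric, nonnegative and has a positive row.  For such a matrix
   the maximum mu of the quadratic form on the unit sphere is the largest eigenvalue;
   it is also attained at the entrywise absolute value w of a maximiser, so w is a
   nonnegative eigenvector, and the positive row forces mu > 0 and w > 0. *)

Section DominantDiagonal.
Variables (R : realFieldType) (n : nat) (d : 'I_n -> R) (P : 'M[R]_n).
Hypotheses (P_ge0 : forall i j, 0 <= P i j) (P_row_lt : forall i, \sum_j P i j < d i).
Local Notation M := (diag_mx (\row_i d i) - P).

Lemma dominant_diag_gt0 i : 0 < d i.
Proof. by apply: le_lt_trans (P_row_lt i); apply: sumr_ge0. Qed.

Lemma mulmx_diag_subE (x : 'cV[R]_n) i :
  (M *m x) i 0 = d i * x i 0 - \sum_j P i j * x j 0.
Proof.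
rewrite mxE; under eq_bigr do rewrite !mxE mulrBl.
rewrite sumrB (bigD1 i) //= eqxx mulr1n big1 ?addr0 // => j /negPf ji.
by rewrite eq_sym ji mulr0n mul0r.
Qed.

Lemma mulmx_diag_subEr (z : 'rV[R]_n) j :
  (z *m M) 0 j = z 0 j * d j - \sum_i z 0 i * P i j.
Proof.
rewrite mxE; under eq_bigr do rewrite !mxE mulrBr.
rewrite sumrB (bigD1 j) //= eqxx mulr1n big1 ?addr0 // => i /negPf ij.
by rewrite ij mulr0n mulr0.
Qed.

(* At a minimal entry [x i 0 < 0], [(M *m x) i 0 <= (d i - \sum_j P i j) * x i 0 < 0]. *)
Lemma diag_sub_min_principle (x : 'cV[R]_n) :
  (forall i, 0 <= (M *m x) i 0) -> forall i, 0 <= x i 0.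
Proof.
move=> Mx_ge0 k.
have [i _ x_min] := @real_arg_minP R _ k predT (fun j => x j 0) isT
  (fun j _ => num_real (x j 0)).
apply: le_trans (x_min k isT); rewrite leNgt; apply/negP => xi_lt0.
have := Mx_ge0 i; rewrite mulmx_diag_subE.
have : \sum_j P i j * x i 0 <= \sum_j P i j * x j 0.
  by apply: ler_sum => j _; apply: ler_wpM2l => //; exact: x_min.
rewrite -mulr_suml; have := P_row_lt i; nra.
Qed.

Lemma diag_sub_unitmx : M \in unitmx.
Proof.
rewrite unitmxE unitfE -det_tr; apply/negP => /det0P [v v_neq0 vM].
have Mv : M *m v^T = 0 by rewrite -[M]trmxK -trmx_mul vM trmx0.
have v_ge0 i : 0 <= v^T i 0 by apply: diag_sub_min_principle => j; rewrite Mv mxE.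
have v_le0 i : 0 <= (- v^T) i 0.
  by apply: diag_sub_min_principle => j; rewrite mulmxN Mv oppr0 mxE.
move/eqP: v_neq0; apply; apply/rowP => i.
by have := v_ge0 i; have := v_le0 i; rewrite !mxE; lra.
Qed.

Lemma invmx_diag_sub_ge0 i j : 0 <= invmx M i j.
Proof.
have := diag_sub_min_principle (x := col j (invmx M)) _ i; rewrite mxE; apply=> k.
by rewrite colE mulmxA mulmxV ?diag_sub_unitmx // mul1mx mxE ler0n.
Qed.

(* Row [s0] of the inverse solves [z_j d_j = [s0 == j] + \sum_i z_i P_ij], so its
   support contains [s0] and is closed under the positive entries of [P]. *)
Lemma invmx_diag_sub_path_gt0 s0 k (u : nat -> 'I_n) : u 0%N = s0 ->
  0 < \prod_(t < k) P (u t) (u t.+1) -> 0 < invmx M s0 (u k).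
Proof.
move=> u0; pose z := row s0 (invmx M).
have z_fix j : z 0 j * d j = (s0 == j)%:R + \sum_i z 0 i * P i j.
  apply/eqP; rewrite -subr_eq -mulmx_diag_subEr.
  by rewrite -row_mul mulVmx ?diag_sub_unitmx // !mxE.
have zP_ge0 i j : 0 <= z 0 i * P i j by rewrite mxE mulr_ge0 ?invmx_diag_sub_ge0.
have z_gt0 j : 0 < z 0 j * d j -> 0 < z 0 j by rewrite pmulr_lgt0 ?dominant_diag_gt0.
have -> : invmx M s0 (u k) = z 0 (u k) by rewrite mxE.
elim: k => [_|k IHk].
  apply/z_gt0; rewrite u0 z_fix eqxx ltr_pwDl ?sumr_ge0 //.
rewrite big_ord_recr /=; set p := \prod_(t < k) _ => p_gt0.
have p_ge0 : 0 <= p by apply: prodr_ge0 => t _.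
have P_ge0' := P_ge0 (u k) (u k.+1).
have /IHk zk_gt0 : 0 < p by nra.
have Pk_gt0 : 0 < P (u k) (u k.+1) by nra.
apply/z_gt0; rewrite z_fix ltr_wpDl //.
apply: lt_le_trans (mulr_gt0 zk_gt0 Pk_gt0) _.
by rewrite (bigD1 (u k)) //= lerDl sumr_ge0.
Qed.
End DominantDiagonal.

Definition mxform (R : pzSemiRingType) n (A : 'M[R]_n) (x y : 'rV[R]_n) : R :=
  (x *m A *m y^T) 0 0.

Section MatrixForm.
Variables (R : comPzRingType) (n : nat).
Implicit Types (A : 'M[R]_n) (x y z : 'rV[R]_n).

Lemma mxformE A x y : mxform A x y = \sum_i \sum_j x 0 i * A i j * y 0 j.
Proof.
rewrite /mxform mxE exchange_big /=; apply: eq_bigr => j _.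
by rewrite !mxE big_distrl /=; apply: eq_bigr => i _; rewrite ?mxE.
Qed.

Lemma mxform1E x y : mxform 1 x y = \sum_i x 0 i * y 0 i.
Proof. by rewrite /mxform mulmx1 mxE; apply: eq_bigr => i _; rewrite mxE. Qed.

Lemma mxform_tr A x y : mxform A x y = mxform A^T y x.
Proof.
by rewrite /mxform -[in LHS](trmxK (x *m A *m y^T)) [in LHS]mxE !trmx_mul trmxK mulmxA.
Qed.

Lemma mxformDl A x y z : mxform A (x + y) z = mxform A x z + mxform A y z.
Proof. by rewrite /mxform !mulmxDl mxE. Qed.

Lemma mxformZl A a x z : mxform A (a *: x) z = a * mxform A x z.
Proof. by rewrite /mxform -!scalemxAl mxE. Qed.

Lemma mxformDr A x y z : mxform A z (x + y) = mxform A z x + mxform A z y.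
Proof. by rewrite mxform_tr mxformDl -!mxform_tr. Qed.

Lemma mxformZr A a x z : mxform A z (a *: x) = a * mxform A z x.
Proof. by rewrite mxform_tr mxformZl -!mxform_tr. Qed.

Lemma mxform_mull A B x y : mxform A (x *m B) y = mxform (B *m A) x y.
Proof. by rewrite /mxform !mulmxA. Qed.

Lemma mxform_sym_expand A x y t : A^T = A ->
  mxform A (x + t *: y) (x + t *: y) =
  mxform A x x + 2 * t * mxform A x y + t ^+ 2 * mxform A y y.
Proof.
move=> A_sym; rewrite !(mxformDl, mxformDr, mxformZl, mxformZr).
by rewrite [mxform A y x]mxform_tr A_sym; ring.
Qed.

End MatrixForm.

Section MatrixFormNorm.
Variables (R : realDomainType) (n : nat).
Implicit Types (x : 'rV[R]_n).

Lemma mxform1_ge0 x : 0 <= mxform 1 x x.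
Proof. by rewrite mxform1E sumr_ge0 // => i _; rewrite -expr2 sqr_ge0. Qed.

Lemma mxform1_eq0 x : (mxform 1 x x == 0) = (x == 0).
Proof.
apply/idP/eqP => [|->]; last by rewrite /mxform !mul0mx mxE.
rewrite mxform1E psumr_eq0 => [/allP x0|i _]; last by rewrite -expr2 sqr_ge0.
apply/rowP => i; apply/eqP; rewrite mxE -[_ == 0]orbb -mulf_eq0.
by have := x0 i; rewrite mem_index_enum; apply.
Qed.

Lemma mxform1_gt0 x : x != 0 -> 0 < mxform 1 x x.
Proof. by move=> x_neq0; rewrite lt_neqAle mxform1_ge0 andbT eq_sym mxform1_eq0. Qed.

End MatrixFormNorm.

Lemma mxform_continuous (R : realType) n (A : 'M[R]_n) :
  continuous (fun x : 'rV[R]_n => mxform A x x).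
Proof.
under eq_fun do rewrite mxformE.
apply: continuous_big => [|i _]; first exact: add_continuous.
apply: continuous_big => [|j _]; first exact: add_continuous.
move=> x; apply: (continuousM (s := fun x : 'rV[R]_n => x 0 i * A i j)).
  apply: (continuousM (t := fun=> A i j)); first exact: coord_continuous.
  exact: cst_continuous.
exact: coord_continuous.
Qed.

Lemma exists_rayleigh_max (R : realType) n (A : 'M[R]_n) (i0 : 'I_n) :
  exists2 c : 'rV[R]_n, mxform 1 c c = 1 &
    forall x, mxform 1 x x = 1 -> mxform A x x <= mxform A c c.
Proof.
pose sphere := [set x : 'rV[R]_n | mxform 1 x x = 1]%classic.
have sphere_neq0 : (sphere !=set0)%classic.
  exists (\row_i (i == i0)%:R); rewrite /sphere /= mxform1E (bigD1 i0) //= big1.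
    by rewrite !mxE eqxx mulr1 addr0.
  by move=> i /negPf i_neq0; rewrite !mxE i_neq0 mulr0.
have sphere_compact : compact sphere.
  apply: (@subclosed_compact _ _
    [set x : 'rV[R]_n | forall i, `[-1, 1]%classic (x 0 i)]%classic).
  - apply: (@preimage_closed _ _ (fun x : 'rV[R]_n => mxform 1 x x) [set 1]%classic).
      by move=> x _; exact: mxform_continuous.
    exact: closed_eq.
  - exact: (@rV_compact R n (fun=> `[-1, 1]%classic) (fun=> @segment_compact _ _ _)).
  - move=> x /= x_unit i; rewrite in_itv /=.
    have : x 0 i ^+ 2 <= 1.
      rewrite -x_unit mxform1E (bigD1 i) //= expr2 lerDl.
      by apply: sumr_ge0 => j _; rewrite -expr2 sqr_ge0.
    by move=> ?; apply/andP; split; nra.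
have [c c_in c_max] := EVT_max_rV sphere_neq0 sphere_compact
  (continuous_subspaceT (@mxform_continuous R n A)).
exists c; first by move: c_in; rewrite inE.
by move=> x x_unit; apply: c_max; rewrite inE.
Qed.

Lemma linear_le_quadratic_eq0 (R : realFieldType) (a b : R) :
  0 <= a -> (forall t, 2 * t * a <= t ^+ 2 * b) -> a = 0.
Proof.
move=> a_ge0 H; apply/eqP; rewrite eq_le a_ge0 andbT leNgt; apply/negP => a_gt0.
pose t := a / (`|b| + 1).
have b1_gt0 : 0 < `|b| + 1 by rewrite ltr_wpDl.
have t_gt0 : 0 < t by rewrite divr_gt0.
have tE : t * (`|b| + 1) = a by rewrite /t mulfVK ?gt_eqF.
have := H t; have := ler_norm b; nra.
Qed.

Section RayleighMaximizer.
Variables (R : rcfType) (n : nat) (S : 'M[R]_n) (c : 'rV[R]_n).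
Hypothesis c_max : forall x, mxform 1 x x = 1 -> mxform S x x <= mxform S c c.
Local Notation mu := (mxform S c c).

Lemma rayleigh_max_le x : mxform S x x <= mu * mxform 1 x x.
Proof.
have [->|x_neq0] := eqVneq x 0; first by rewrite /mxform !mul0mx mxE mulr0.
pose s := Num.sqrt (mxform 1 x x).
have s_gt0 : 0 < s by rewrite sqrtr_gt0 mxform1_gt0.
have s2E : s ^+ 2 = mxform 1 x x by rewrite sqr_sqrtr // mxform1_ge0.
have xs_unit : mxform 1 (s^-1 *: x) (s^-1 *: x) = 1.
  by rewrite mxformZl mxformZr mulrA -s2E; field; rewrite gt_eqF.
have := c_max xs_unit; rewrite mxformZl mxformZr mulrA -s2E => Sxs_le.
have -> : mxform S x x = s ^+ 2 * (s^-1 * s^-1 * mxform S x x).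
  by field; rewrite gt_eqF.
by rewrite [mu * _]mulrC ler_wpM2l // sqr_ge0.
Qed.

(* [y] maximises [x |-> mxform S x x - mu * |x|^2], whose derivative at [y] in the
   direction [g = y S - mu y] is [2 |g|^2]; that derivative must vanish. *)
Lemma rayleigh_max_eigenvector y : S^T = S ->
  mxform S y y = mu * mxform 1 y y -> y *m S = mu *: y.
Proof.
move=> S_sym y_max; pose g := y *m S - mu *: y.
have gE : mxform 1 g g = mxform S y g - mu * mxform 1 y g.
  by rewrite mxformDl -scaleN1r !mxformZl mxform_mull mulmx1; ring.
suff /eqP : mxform 1 g g = 0 by rewrite mxform1_eq0 subr_eq0 => /eqP.
apply: (@linear_le_quadratic_eq0 _ _ (mu * mxform 1 g g - mxform S g g)).
  exact: mxform1_ge0.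
move=> t; have := rayleigh_max_le (y + t *: g).
by rewrite !mxform_sym_expand ?trmx1 // y_max gE; lra.
Qed.

Lemma eigenvalue_le_rayleigh_max a : eigenvalue S a -> a <= mu.
Proof.
move=> /eigenvalueP [v vS v_neq0].
have Sv : mxform S v v = a * mxform 1 v v.
  by rewrite -[S]mulmx1 -mxform_mull vS mxformZl.
by have := rayleigh_max_le v; rewrite Sv ler_pM2r // mxform1_gt0.
Qed.

End RayleighMaximizer.

Lemma rayleigh_max_norm (R : realDomainType) n (S : 'M[R]_n) (c : 'rV[R]_n) :
  (forall i j, 0 <= S i j) ->
  (forall x, mxform 1 x x = 1 -> mxform S x x <= mxform S c c) ->
  mxform 1 c c = 1 ->
  mxform 1 (map_mx Num.norm c) (map_mx Num.norm c) = 1 /\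
  mxform S (map_mx Num.norm c) (map_mx Num.norm c) = mxform S c c.
Proof.
move=> S_ge0 c_max c_unit.
have norm_unit : mxform 1 (map_mx Num.norm c) (map_mx Num.norm c) = 1.
  rewrite -c_unit !mxform1E; apply: eq_bigr => i _.
  by rewrite !mxE -normrM ger0_norm // -expr2 sqr_ge0.
split=> //; apply/le_anti; rewrite c_max //=.
rewrite !mxformE; apply: ler_sum => i _; apply: ler_sum => j _.
rewrite !mxE; apply: le_trans (ler_norm _) _.
by rewrite !normrM (ger0_norm (S_ge0 i j)).
Qed.

(* [mu w_i >= w_k S_ki] for all [k]: use it at [i = s0] with some [w_k > 0] to get
   [mu > 0] and [w_s0 > 0], then at [k = s0]. *)
Lemma nonneg_eigenvector_gt0 (R : realFieldType) n (S : 'M[R]_n) (s0 : 'I_n)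
    (mu : R) (w : 'rV[R]_n) :
  S^T = S -> (forall i j, 0 <= S i j) -> (forall i, 0 < S s0 i) ->
  (forall i, 0 <= w 0 i) -> w != 0 -> w *m S = mu *: w ->
  0 < mu /\ forall i, 0 < w 0 i.
Proof.
move=> S_sym S_ge0 S_s0_gt0 w_ge0 w_neq0 wS.
have mu_w_ge k i : w 0 k * S k i <= mu * w 0 i.
  have -> : mu * w 0 i = (w *m S) 0 i by rewrite wS mxE.
  by rewrite mxE (bigD1 k) //= lerDl sumr_ge0 // => l _; rewrite mulr_ge0.
have [k wk_gt0] : exists k, 0 < w 0 k.
  have /existsP [k wk_neq0] : [exists k, w 0 k != 0].
    apply: contraNT w_neq0 => /existsPn w0; apply/eqP/rowP => k.
    by have := w0 k; rewrite negbK mxE => /eqP.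
  by exists k; rewrite lt_neqAle eq_sym wk_neq0 w_ge0.
have S_k_s0 : 0 < S k s0 by rewrite -S_sym mxE.
have := mu_w_ge k s0; have := w_ge0 s0 => ws0_ge0 mu_ws0.
have mu_gt0 : 0 < mu by nra.
have ws0_gt0 : 0 < w 0 s0 by nra.
split=> // i; have := mu_w_ge s0 i; have := S_s0_gt0 i; nra.
Qed.

Lemma sym_nonneg_perron (R : realType) n (S : 'M[R]_n) (s0 : 'I_n) :
  S^T = S -> (forall i j, 0 <= S i j) -> (forall i, 0 < S s0 i) ->
  exists (mu : R) (v : 'rV[R]_n),
    eigenvalue S mu /\ (forall mu', eigenvalue S mu' -> mu' <= mu) /\
    0 < mu /\ v *m S = mu *: v /\ (forall i, 0 < v 0 i).
Proof.
move=> S_sym S_ge0 S_s0_gt0.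
have [c c_unit c_max] := exists_rayleigh_max S s0.
have [w_unit Sw] := rayleigh_max_norm S_ge0 c_max c_unit.
set w := map_mx Num.norm c in w_unit Sw.
have w_max x : mxform 1 x x = 1 -> mxform S x x <= mxform S w w.
  by rewrite Sw; apply: c_max.
have wS : w *m S = mxform S w w *: w.
  by apply: (rayleigh_max_eigenvector w_max S_sym); rewrite w_unit mulr1.
have w_neq0 : w != 0 by rewrite -mxform1_eq0 w_unit oner_eq0.
have w_ge0 i : 0 <= w 0 i by rewrite mxE.
have [mu_gt0 w_gt0] :=
  nonneg_eigenvector_gt0 S_sym S_ge0 S_s0_gt0 w_ge0 w_neq0 wS.
exists (mxform S w w), w; split; first by apply/eigenvalueP; exists w.
by split; [exact: eigenvalue_le_rayleigh_max w_max|].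
Qed.

Theorem propositionC2 (R : realType) (n : nat) (SN : {set 'I_n})
  (r : 'I_n -> R) (lambda : R) (P : 'M[R]_n) (s0 : 'I_n) :
  (forall s, s \in SN -> r s < 0) ->
  0 < lambda ->
  (forall i j, 0 <= P i j) ->
  (forall i, i \in SN -> \sum_j P i j = 1) ->
  (forall i j, i \notin SN -> P i j = 0) ->
  (forall s, reachable P s0 s) ->
  exists (mu : R) (v : 'rV[R]_n),
    eigenvalue (symm_part (default_rep r lambda P)) mu /\
    (forall mu', eigenvalue (symm_part (default_rep r lambda P)) mu' -> mu' <= mu) /\
    0 < mu /\
    v *m symm_part (default_rep r lambda P) = mu *: v /\
    (forall i, 0 < v 0 i).
Proof.
move=> r_lt0 lambda_gt0 P_ge0 P_row1 P_row0 reach.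
have P_row_lt i : \sum_j P i j < expR (- r i / lambda).
  have [iSN|iNSN] := boolP (i \in SN).
    by rewrite P_row1 // expR_gt1 divr_gt0 // oppr_gt0 r_lt0.
  by rewrite big1 ?expR_gt0 // => j _; exact: P_row0.
set Z := default_rep r lambda P.
have Z_ge0 i j : 0 <= Z i j := invmx_diag_sub_ge0 P_ge0 P_row_lt i j.
have Z_s0_gt0 j : 0 < Z s0 j.
  have [k [u [u0 [<-]]]] := reach j.
  exact: (invmx_diag_sub_path_gt0 P_ge0 P_row_lt (k := k) u0).
apply: (sym_nonneg_perron (s0 := s0)) => [|i j|i]; rewrite ?mxE.
- by apply/matrixP => i j; rewrite !mxE addrC.
- by rewrite mulr_ge0 ?addr_ge0 ?mxE.
- by rewrite mulr_gt0 ?ltr_wpDr ?mxE.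
Qed.
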